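(* Let $X$ be a pure $d$-dimensional simplicial complex, $0\le k\le d-1$, $0\le i\le d-k$, $\sigma\in X(k+i)$ and $r$ a face of $R_k(X)$ with $\bigcup r=\sigma$. Then $$w_{R_k(X)}(r)=\frac{1}{|\{r'\in R_k(X):\textstyle\bigcup r'=\sigma\}|}\,w_X(\sigma),$$ where $|\{r':\bigcup r'=\sigma\}|=\binom{k+i+1}{k}$ if $i>0$ and $=1$ if $i=0$.
   Context: $X(j)$ = faces with $j+1$ elements. For a pure $D$-dimensional complex $Y$, $w_Y(\sigma)=|\{\tau\in Y(D):\sigma\subseteq\tau\}|/(\binom{D+1}{|\sigma|}|Y(D)|)$. The representation complex $R_k(X)$ has vertex set $X(k)$ (a vertex $\tau$ is identified with $\{\tau\}$, so $\bigcup\{\tau\}=\tau$) and, for $1\le i\le d-k$, $i$-faces the sets $S$ of $i+1$ distinct elements of $X(k)$ with $\bigcup S\in X(i+k)$ and $|\bigcap S|=k$; it is pure of dimension $d-k$ and carries its own weights $w_{R_k(X)}$. *)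

From mathcomp Require Import all_boot all_order all_algebra.
Set Implicit Arguments. Unset Strict Implicit. Unset Printing Implicit Defensive.
Import GRing.Theory Num.Theory.
Local Open Scope ring_scope.

Definition faces (T : finType) (X : {set {set T}}) (j : nat) : {set {set T}} :=
  [set s in X | #|s| == j.+1].

Definition pure_complex (T : finType) (X : {set {set T}}) (d : nat) : Prop :=
  [/\ set0 \notin X,
      (forall s t : {set T}, s \in X -> t \subset s -> t != set0 -> t \in X),
      (forall s : {set T}, s \in X -> (#|s| <= d.+1)%N),
      (forall s : {set T}, s \in X -> exists2 t : {set T}, t \in faces X d & s \subset t)
    & faces X d != set0].

Definition weight (T : finType) (Y : {set {set T}}) (D : nat) (s : {set T}) : rat :=
  (#|[set t in faces Y D | s \subset t]|)%:R /
  (('C(D.+1, #|s|) * #|faces Y D|)%N)%:R.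

Definition union_of (T : finType) (S : {set {set T}}) : {set T} := \bigcup_(t in S) t.
Definition inter_of (T : finType) (S : {set {set T}}) : {set T} := \bigcap_(t in S) t.

(* The representation complex R_k(X): vertices {tau} for tau in X(k);
   i-faces (i >= 1) are sets S of i+1 elements of X(k) with union in X(i+k)
   and intersection of size k. (The bound i <= d-k is automatic since
   X(i+k) is empty for i+k > d in a d-dimensional complex.) *)
Definition repr_complex (T : finType) (k : nat) (X : {set {set T}})
  : {set {set {set T}}} :=
  [set S : {set {set T}} | (S \subset faces X k) &&
     ((#|S| == 1%N) ||
      [&& (2 <= #|S|)%N, union_of S \in faces X (#|S|.-1 + k) & #|inter_of S| == k])].

From mathcomp Require Import all_boot all_order all_algebra.
From mathcomp Require Import ring zify.
Set Implicit Arguments. Unset Strict Implicit. Unset Printing Implicit Defensive.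
Import GRing.Theory Num.Theory.

(* A face S of R_k(X) with at least two vertices is the pencil of all
   (k+1)-subsets J :|: [set x] of its union tau through its k-element
   intersection J.  So the faces of R_k(X) with union tau correspond to the
   k-subsets of tau: over each top face of X lie 'C(d+1, k) top faces of
   R_k(X), and over each top face containing sigma = union r lie
   'C(#|inter r|, k) top faces containing r.  The weight identity then
   reduces to 'C(n, a) * 'C(n - a, b) = 'C(n, a + b) * 'C(a + b, a). *)

Lemma mul_bin_sub n a b : (a + b <= n)%N ->
  ('C(n, a) * 'C(n - a, b) = 'C(n, a + b) * 'C(a + b, a))%N.
Proof.
move=> le_abn.
have F1 := bin_fact (leq_trans (leq_addr b a) le_abn).
have F2 : 'C(n - a, b) * (b`! * (n - a - b)`!) = (n - a)`! by apply: bin_fact; lia.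
have F3 := bin_fact le_abn.
have F4 := bin_fact (leq_addr b a); rewrite addKn in F4.
apply/eqP; rewrite -(@eqn_pmul2r (a`! * b`! * (n - a - b)`!)) ?muln_gt0 ?fact_gt0 //.
apply/eqP; transitivity n`!; first by rewrite -F1 -F2; ring.
by rewrite -F3 -F4 subnDA; ring.
Qed.

Section Pencil.
Variable T : finType.
Implicit Types (tau J t : {set T}) (r : {set {set T}}).

Definition pencil tau J : {set {set T}} := [set J :|: [set x] | x in tau :\: J].

Lemma mem_pencil tau J t : J \subset tau ->
  (t \in pencil tau J) = [&& J \subset t, t \subset tau & #|t| == #|J|.+1].
Proof.
move=> Jtau; apply/imsetP/and3P => [[x] | [Jt ttau /eqP ct]].
  rewrite inE => /andP[xJ xtau] ->.
  by rewrite subsetUl subUset Jtau sub1set xtau setUC cardsU1 xJ.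
have /cards1P[x tJx] : #|t :\: J| == 1%N by rewrite cardsDS // ct subSnn.
have xtJ : x \in t :\: J by rewrite tJx set11.
exists x; first by move: xtJ; rewrite !inE => /andP[-> /(subsetP ttau)].
by rewrite -tJx -{1}(setID t J) (setIidPr Jt).
Qed.

Lemma card_pencil tau J : #|pencil tau J| = #|tau :\: J|.
Proof.
apply: card_in_imset => x y; rewrite !inE => /andP[xJ _] /andP[yJ _] eJxy.
have : x \in J :|: [set y] by rewrite -eJxy !inE eqxx orbT.
by rewrite !inE (negbTE xJ) => /eqP.
Qed.

Lemma union_pencil tau J : J \subset tau -> (#|J| < #|tau|)%N ->
  union_of (pencil tau J) = tau.
Proof.
move=> Jtau ltJtau; apply/eqP; rewrite eqEsubset; apply/andP; split.
  by apply/bigcupsP => t; rewrite mem_pencil // => /and3P[].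
have /set0Pn[x0 x0tJ] : tau :\: J != set0 by rewrite -card_gt0 cardsDS // subn_gt0.
apply/subsetP => z ztau; apply/bigcupP.
have [zJ | zJ] := boolP (z \in J).
  by exists (J :|: [set x0]); [apply: imset_f | rewrite inE zJ].
exists (J :|: [set z]); first by apply: imset_f; rewrite inE zJ.
by rewrite !inE eqxx orbT.
Qed.

(* Any two distinct members [J :|: [set x]] and [J :|: [set y]] meet in [J]. *)
Lemma inter_pencil tau J : J \subset tau -> (#|J|.+1 < #|tau|)%N ->
  inter_of (pencil tau J) = J.
Proof.
move=> Jtau ltJtau; apply/eqP; rewrite eqEsubset; apply/andP; split; last first.
  by apply/bigcapsP => t; rewrite mem_pencil // => /and3P[].
apply/subsetP => z zI; apply/negPn/negP => zJ.
have : tau :\: J \subset [set z].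
  apply/subsetP => x xtJ; move/bigcapP: zI => /(_ (J :|: [set x]) (imset_f _ xtJ)).
  by rewrite !inE (negbTE zJ) eq_sym.
by move/subset_leq_card; rewrite cards1 cardsDS //; lia.
Qed.

Lemma inter_sub_union r : (0 < #|r|)%N -> inter_of r \subset union_of r.
Proof.
by case/card_gt0P => t tr; apply: subset_trans (bigcap_inf _ tr) (bigcup_sup _ tr).
Qed.

Lemma card_partition_union (A : {set {set {set T}}}) (B : {set {set T}}) :
  {in A, forall S, union_of S \in B} ->
  #|A| = (\sum_(tau in B) #|[set S in A | union_of S == tau]|)%N.
Proof.
move=> AB; rewrite -sum1_card (partition_big (@union_of T) (mem B)) //=.
by apply: eq_bigr => tau _; rewrite -sum1_card; apply: eq_bigl => S; rewrite inE.
Qed.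

Lemma subset_pencil r tau J : J \subset tau -> union_of r \subset tau ->
  {in r, forall t, #|t| = #|J|.+1} ->
  (r \subset pencil tau J) = (J \subset inter_of r).
Proof.
move=> Jtau rtau cr; apply/subsetP/bigcapsP => [rJ t tr | Jr t tr].
  by move: (rJ t tr); rewrite mem_pencil // => /and3P[].
by rewrite mem_pencil // Jr //= cr // eqxx (subset_trans (bigcup_sup _ tr)).
Qed.

Lemma union_sub_pencil r tau J : J \subset tau -> r \subset pencil tau J ->
  union_of r \subset tau.
Proof.
move=> Jtau /subsetP rJ; apply/bigcupsP => t /rJ.
by rewrite mem_pencil // => /and3P[].
Qed.

End Pencil.

Section ReprComplex.
Variables (T : finType) (X : {set {set T}}) (k : nat).
Local Notation R := (repr_complex k X).
Implicit Types (S : {set {set T}}) (tau J t : {set T}).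

Lemma card_repr_gt0 S : S \in R -> (0 < #|S|)%N.
Proof. by rewrite inE => /andP[_ /orP[/eqP -> | /and3P[S2 _ _]]] //; lia. Qed.

Lemma card_repr_vertex S t : S \in R -> t \in S -> #|t| = k.+1.
Proof. by rewrite inE => /andP[/subsetP Sk _] /Sk; rewrite inE => /andP[_ /eqP]. Qed.

Lemma union_repr S : S \in R -> union_of S \in faces X (#|S|.-1 + k).
Proof.
rewrite inE => /andP[Sk /orP[/cards1P[t St] | /and3P[_ -> _]]] //.
by move: Sk; rewrite St /union_of big_set1 sub1set cards1.
Qed.

Lemma card_union_repr S : S \in R -> #|union_of S| = (#|S| + k)%N.
Proof.
move=> SR; have := card_repr_gt0 SR.
by move: (union_repr SR); rewrite inE => /andP[_ /eqP ->]; lia.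
Qed.

Lemma card_inter_repr S : S \in R -> #|inter_of S| = if (1 < #|S|)%N then k else k.+1.
Proof.
rewrite inE => /andP[Sk /orP[/cards1P[t St] | /and3P[S2 _ /eqP ->]]]; last by rewrite S2.
by move: Sk; rewrite St cards1 /inter_of big_set1 sub1set inE => /andP[_ /eqP].
Qed.

Lemma repr_pencil S : S \in R -> (1 < #|S|)%N -> S = pencil (union_of S) (inter_of S).
Proof.
move=> SR S2; have IU := inter_sub_union (card_repr_gt0 SR).
have := card_inter_repr SR; rewrite S2 => cI.
apply/eqP; rewrite eqEcard card_pencil cardsDS // card_union_repr // cI addnK leqnn.
by rewrite subset_pencil ?subxx // => t tS; rewrite cI (card_repr_vertex SR tS).
Qed.

Hypothesis subset_closed :
  forall s t : {set T}, s \in X -> t \subset s -> t != set0 -> t \in X.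

Lemma pencil_in_repr tau J : tau \in X -> J \subset tau -> #|J| = k ->
  (k.+1 < #|tau|)%N -> pencil tau J \in R.
Proof.
move=> tauX Jtau cJ ltk; rewrite inE; apply/andP; split.
  apply/subsetP => t; rewrite mem_pencil // cJ inE => /and3P[_ ttau ct].
  by rewrite ct andbT (subset_closed tauX ttau) // -card_gt0 (eqP ct).
rewrite card_pencil cardsDS // union_pencil ?inter_pencil ?cJ //; try lia.
rewrite inE tauX eqxx /=; apply/orP; right; apply/andP; split; apply/eqP; lia.
Qed.

Lemma card_repr_with_union tau (Q : pred {set {set T}}) :
  tau \in X -> (k.+1 < #|tau|)%N ->
  #|[set S in R | (union_of S == tau) && Q S]| =
  #|[set J : {set T} | [&& J \subset tau, #|J| == k & Q (pencil tau J)]]|.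
Proof.
move=> tauX ltk.
have -> : [set S in R | (union_of S == tau) && Q S] =
          pencil tau @: [set J : {set T} | [&& J \subset tau, #|J| == k & Q (pencil tau J)]].
  apply/setP => S; apply/idP/imsetP => [|[J]].
    rewrite inE => /and3P[SR /eqP US QS].
    have S2 : (1 < #|S|)%N by move: (card_union_repr SR); rewrite US; lia.
    have eS := repr_pencil SR S2; have := card_inter_repr SR; rewrite S2 => cI.
    have IU := inter_sub_union (card_repr_gt0 SR).
    exists (inter_of S); last by rewrite -US -eS.
    by rewrite inE -US -eS QS cI eqxx IU.
  rewrite inE => /and3P[Jtau /eqP cJ QJ] ->.
  by rewrite inE pencil_in_repr // union_pencil ?cJ ?eqxx //; lia.
apply: card_in_imset => J1 J2; rewrite !inE.
move=> /and3P[J1tau /eqP c1 _] /and3P[J2tau /eqP c2 _] e.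
by rewrite -(inter_pencil J1tau) ?c1 // e inter_pencil ?c2.
Qed.

Lemma card_repr_fiber sigma : sigma \in X -> (k < #|sigma|)%N ->
  #|[set S in R | union_of S == sigma]| =
  if (k.+1 < #|sigma|)%N then 'C(#|sigma|, k) else 1%N.
Proof.
move=> sX ltk; case: ifP => lt2.
  transitivity #|[set S in R | (union_of S == sigma) && predT S]|.
    by apply: eq_card => S; rewrite !inE andbT.
  by rewrite card_repr_with_union // -cards_draws; apply: eq_card => J; rewrite !inE andbT.
have cs : #|sigma| = k.+1 by lia.
apply/eqP/cards1P; exists [set sigma]; apply/setP => S; rewrite in_set1 inE.
apply/andP/eqP => [[SR /eqP US] | ->].
  have /cards1P[t St] : #|S| == 1%N by move: (card_union_repr SR); rewrite US cs => ?; lia.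
  by move: US; rewrite St /union_of big_set1 => ->.
by rewrite /union_of big_set1 eqxx inE sub1set cards1 eqxx !inE sX cs eqxx.
Qed.

Section TopFaces.
Variable d : nat.
Hypothesis lt_kd : (k < d)%N.

Lemma union_repr_top S : S \in faces R (d - k) -> union_of S \in faces X d.
Proof.
rewrite inE => /andP[SR /eqP cS]; have := union_repr SR.
by rewrite cS /= subnK // ltnW.
Qed.

Lemma card_repr_top : #|faces R (d - k)| = (#|faces X d| * 'C(d.+1, k))%N.
Proof.
rewrite (card_partition_union (B := faces X d)) => [|S]; last exact: union_repr_top.
rewrite -sum_nat_const; apply: eq_bigr => tau; rewrite inE => /andP[tauX /eqP ctau].
transitivity #|[set S in R | (union_of S == tau) && (#|S| == (d - k).+1)]|.
  by apply: eq_card => S; rewrite !inE andbAC -andbA.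
rewrite card_repr_with_union ?ctau ?ltnS // -ctau -cards_draws; apply: eq_card => J; rewrite !inE.
case: (boolP (J \subset tau)) => //= Jtau; case: (boolP (#|J| == k)) => //= /eqP cJ.
by rewrite card_pencil cardsDS // cJ ctau; apply/eqP; lia.
Qed.

Lemma card_repr_top_supsets r : r \in R ->
  #|[set S in faces R (d - k) | r \subset S]| =
  (#|[set tau in faces X d | union_of r \subset tau]| * 'C(#|inter_of r|, k))%N.
Proof.
move=> rR; have IU := inter_sub_union (card_repr_gt0 rR).
rewrite (card_partition_union (B := faces X d)) => [|S]; last first.
  by rewrite inE => /andP[/union_repr_top].
rewrite -sum_nat_const.
rewrite [RHS](eq_bigl (fun tau => (tau \in faces X d) && (union_of r \subset tau)));
  last by move=> tau; rewrite inE.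
rewrite big_mkcondr /=; apply: eq_bigr => tau; rewrite inE => /andP[tauX /eqP ctau].
transitivity
  #|[set S in R | (union_of S == tau) && ((#|S| == (d - k).+1) && (r \subset S))]|.
  by apply: eq_card => S; rewrite !inE -!andbA; do 2!congr (_ && _); rewrite andbA andbC.
rewrite card_repr_with_union ?ctau ?ltnS //.
case: (boolP (union_of r \subset tau)) => rtau; last first.
  apply: eq_card0 => J; rewrite !inE; apply/and3P => -[Jtau _ /andP[_ rJ]].
  by case/negP: rtau; apply: union_sub_pencil Jtau rJ.
rewrite -cards_draws; apply: eq_card => J; rewrite !inE.
have vertex_card : #|J| = k -> {in r, forall t, #|t| = #|J|.+1}.
  by move=> cJ t tr; rewrite cJ (card_repr_vertex rR tr).
apply/and3P/andP => [[Jtau /eqP cJ /andP[_ rJ]] | [Jr /eqP cJ]].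
  by split; [rewrite -(subset_pencil Jtau rtau (vertex_card cJ)) | apply/eqP].
have Jtau : J \subset tau by apply: subset_trans Jr (subset_trans IU rtau).
rewrite Jtau cJ (subset_pencil Jtau rtau (vertex_card cJ)) Jr card_pencil cardsDS //.
by rewrite cJ ctau andbT; split => //; apply/eqP; lia.
Qed.

End TopFaces.

End ReprComplex.

Local Open Scope ring_scope.

Theorem mainTheorem13 (T : finType) (X : {set {set T}}) (d k i : nat) :
  pure_complex X d -> (k < d)%N -> (i <= d - k)%N ->
  forall (sigma : {set T}), sigma \in faces X (k + i) ->
  forall (r : {set {set T}}), r \in repr_complex k X -> union_of r = sigma ->
  let N := #|[set r' in repr_complex k X | union_of r' == sigma]| in
  weight (repr_complex k X) (d - k) r = (N%:R)^-1 * weight X d sigma /\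
  N = (if (0 < i)%N then 'C(k + i + 1, k) else 1%N).
Proof.
move=> [_ subset_closed _ _ top_ne] lt_kd le_id sigma sigmaF r rR ur N.
have [sigmaX cs] : sigma \in X /\ #|sigma| = ((k + i).+1)%N.
  by move: sigmaF; rewrite inE => /andP[-> /eqP].
have cr : #|r| = (i.+1)%N by have := card_union_repr rR; rewrite ur cs; lia.
have Nval : N = (if (0 < i)%N then 'C(k + i + 1, k) else 1%N).
  by rewrite /N card_repr_fiber // ?cs ?ltnS ?leq_addr // -{1}(addn0 k) ltn_add2l addn1.
split => //.
have cN : ('C(#|inter_of r|, k) * N = 'C(k + i.+1, k))%N.
  rewrite (card_inter_repr rR) cr Nval.
  by case: (i) => [|j]; rewrite /= ?muln1 ?binn ?mul1n addn1 ?addnS.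
have le_kid : (k + i.+1 <= d.+1)%N by lia.
have := mul_bin_sub le_kid.
rewrite -cN subSn ?(ltnW lt_kd) // addnS => bin_eq.
have /andP[c_gt0 N_gt0] : ((0 < 'C(#|inter_of r|, k)) && (0 < N))%N.
  by rewrite -muln_gt0 cN bin_gt0 leq_addr.
have top_gt0 : (0 < #|faces X d|)%N by rewrite card_gt0.
have Cs_gt0 : (0 < 'C(d.+1, (k + i).+1))%N by rewrite bin_gt0; lia.
rewrite /weight card_repr_top // card_repr_top_supsets // cr ur cs.
rewrite (mulnC #|faces X d|) mulnA [(_ * 'C(d.+1, k))%N]mulnC bin_eq !natrM.
by field; rewrite !pnatr_eq0 -!lt0n top_gt0 Cs_gt0 N_gt0 c_gt0.
Qed.
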